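(* Let $X$ be a Banach space and let $\Pi(X)=\{(x,x^* )\in S_X\times S_{X^*}\colon x^*(x)=1\}$. The following are equivalent: (i) $X$ has property [P]; (ii) the set $\{(x,x^* )\in\operatorname{str\text{-}exp}(B_X)\times\operatorname{SE}(X)\colon \|x^*\|=x^*(x)=1\}$ is dense in $\Pi(X)$; (iii) $X$ has property [P] witnessed by the function $\varepsilon\mapsto\varepsilon^2/2$.
   Context: $\operatorname{SE}(X)$ is the set of $x^*\in X^*$ strongly exposing $B_X$: there is $x_0\in B_X$ with $\operatorname{Re}x^*(x_0)=\sup_{B_X}\operatorname{Re}x^*$ and every sequence $\{x_n\}\subset B_X$ with $\operatorname{Re}x^*(x_n)\to\operatorname{Re}x^*(x_0)$ converges in norm to $x_0$; $\operatorname{str\text{-}exp}(B_X)$ is the set of points of $B_X$ strongly exposed by some functional. $X$ has property [P] (witnessed by a function $\varepsilon\in(0,1)\mapsto\eta(\varepsilon)>0$) if whenever $x\in S_X$, $x^*\in S_{X^*}$ satisfy $\operatorname{Re}x^*(x)>1-\eta(\varepsilon)$, there exist $y^*\in\operatorname{SE}(X)$ and $y\in S_X$ with $\|y^*\|=y^*(y)=1$, $\|y^*-x^*\|<\varepsilon$ and $\|y-x\|<\varepsilon$. Density in $\Pi(X)$ is with respect to the product norm topology. *)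

From mathcomp Require Import all_boot all_order all_algebra.
From mathcomp Require Import all_classical all_reals all_analysis.
From mathcomp.real_closed Require Import complex.
Import Order.TTheory GRing.Theory Num.Theory.
Import numFieldNormedType.Exports.
Set Implicit Arguments. Unset Strict Implicit. Unset Printing Implicit Defensive.
Local Open Scope classical_set_scope.
Local Open Scope ring_scope.

(* Banach spaces over K = R (real case, re = id) or K = R[i] (complex case,
   re = complex real part).  [re] is used both for the real part Re and to
   read the (real-valued) norm of K as an element of R. *)
Section BanachDefs.
Context {R : realType} {K : numFieldType} (re : K -> R) {X : normedModType K}.

Definition nrm (x : X) : R := re `|x|.

Definition ballX : set X := [set x | nrm x <= 1].
Definition sphX : set X := [set x | nrm x = 1].

Definition is_dual (f : X -> K) : Prop :=
  (forall (a : K) (u v : X), f (a *: u + v) = a * f u + f v) /\ continuous f.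

Definition dnorm (f : X -> K) : R := sup [set re `|f x| | x in ballX].

Definition strongly_exposes (f : X -> K) (x0 : X) : Prop :=
  ballX x0 /\
  re (f x0) = sup [set re (f x) | x in ballX] /\
  forall u : nat -> X, (forall n, ballX (u n)) ->
    (fun n => re (f (u n))) @ \oo --> re (f x0) -> u @ \oo --> x0.

Definition SE (f : X -> K) : Prop := is_dual f /\ exists x0, strongly_exposes f x0.

Definition str_exp (x : X) : Prop := exists f, is_dual f /\ strongly_exposes f x.

Definition PiX (x : X) (f : X -> K) : Prop :=
  sphX x /\ is_dual f /\ dnorm f = 1 /\ f x = 1.

Definition propP_with (eta : R -> R) : Prop :=
  (forall e : R, 0 < e < 1 -> 0 < eta e) /\
  forall e : R, 0 < e < 1 ->
  forall (x : X) (f : X -> K), sphX x -> is_dual f -> dnorm f = 1 ->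
    re (f x) > 1 - eta e ->
    exists (g : X -> K) (y : X),
      SE g /\ sphX y /\ dnorm g = 1 /\ g y = 1 /\
      dnorm (fun z => g z - f z) < e /\ nrm (y - x) < e.

Definition propP : Prop := exists eta : R -> R, propP_with eta.

Definition dense_strexp_SE : Prop :=
  forall (x : X) (f : X -> K), PiX x f ->
  forall e : R, 0 < e ->
  exists (y : X) (g : X -> K),
    str_exp y /\ SE g /\ dnorm g = 1 /\ g y = 1 /\
    nrm (y - x) < e /\ dnorm (fun z => g z - f z) < e.

Definition lemma3p10_equiv : Prop :=
  (propP <-> dense_strexp_SE) /\
  (dense_strexp_SE <-> propP_with (fun e => e ^+ 2 / 2)).

End BanachDefs.

(* For (i) => (ii), property [P] applied to a pair
   (x, x^* ) of Pi(X) yields a strongly exposing y^* with y^*(y) = 1 = |y^*|;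
   feeding the constant sequence y into the definition of strong exposure shows
   that y is the point exposed by y^*, so y is strongly exposed.  For
   (ii) => (iii), the Bishop-Phelps-Bollobas theorem with the sharp constant
   eps^2/2 gives a pair of Pi(X) strictly within eps of (x, x^* ), and density
   of the pairs of (ii) absorbs the remaining slack.
   The Bishop-Phelps-Bollobas theorem is proved as by Phelps: Ekeland's
   principle gives y in B_X, close to x, at which Re x^* - lam |. - y| is
   maximal on B_X; a Hahn-Banach separation of the cone spanned by B_X - y from
   the lam-ball yields w with |w| <= lam such that x^* + w attains its norm at
   y, and normalising x^* + w gives y^*.  Real and complex scalars are handled
   at once through the real part [re : K -> R]. *)

From Pilot Require Import Defs.
From mathcomp Require Import all_boot all_order all_algebra.
From mathcomp Require Import all_classical all_reals all_analysis.
From mathcomp.real_closed Require Import complex.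
From mathcomp Require Import ring lra.
Import Order.TTheory GRing.Theory Num.Theory.
Import numFieldNormedType.Exports.
Local Open Scope classical_set_scope.
Local Open Scope ring_scope.
Set Implicit Arguments. Unset Strict Implicit. Unset Printing Implicit Defensive.

(* [V] is a real vector space through [sc], given explicitly because the
   spaces it is applied to are normed over [K], not over [R]. *)
Section SublinearHahnBanach.
Variables (R : realType) (V : zmodType) (sc : R -> V -> V).
Hypothesis scDr : forall s v w, sc s (v + w) = sc s v + sc s w.
Hypothesis scDl : forall s t v, sc (s + t) v = sc s v + sc t v.
Hypothesis scA : forall s t v, sc s (sc t v) = sc (s * t) v.
Hypothesis sc1 : forall v, sc 1 v = v.

Lemma sc0r v : sc 0 v = 0.
Proof. by apply: (addrI (sc 0 v)); rewrite -scDl !addr0. Qed.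

Lemma scNr s v : sc (- s) v = - sc s v.
Proof. by apply/eqP; rewrite -addr_eq0 -scDl addNr sc0r. Qed.

Lemma scr0 s : sc s 0 = 0.
Proof. by apply: (addrI (sc s 0)); rewrite -scDr !addr0. Qed.

Definition sublinear (p : V -> R) :=
  (forall v w, p (v + w) <= p v + p w) /\ (forall s v, 0 < s -> p (sc s v) = s * p v).

Section Sublinear.
Variable p : V -> R.
Hypothesis p_sub : sublinear p.

Lemma sublinear0 : p 0 = 0.
Proof. by have := p_sub.2 2 0 (ltr0Sn _ 1); rewrite scr0 => e; lra. Qed.

Lemma sublinearZ_ge0 s v : 0 <= s -> p (sc s v) = s * p v.
Proof.
rewrite le_eqVlt => /predU1P[<-|]; last exact: p_sub.2.
by rewrite sc0r mul0r sublinear0.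
Qed.

Lemma sublinearN_le v : - p (- v) <= p v.
Proof. by have := p_sub.1 v (- v); rewrite subrr sublinear0; lra. Qed.

End Sublinear.

Variable q : V -> R.
Hypothesis q_sub : sublinear q.

Definition minorant := {p : V -> R | sublinear p /\ forall v, p v <= q v}.

Definition minorant_ge (a b : minorant) : bool := `[< forall v, sval b v <= sval a v >].

Lemma minorant_lb (a : minorant) v : - q (- v) <= sval a v.
Proof. by case: a => p [sp pq] /=; have := sublinearN_le sp v; have := pq (- v); lra. Qed.

Section ChainInf.
Variable A : set minorant.
Hypothesis A_chain : total_on A minorant_ge.
Variable a0 : minorant.
Hypothesis A_a0 : A a0.

Definition chain_inf v := inf [set sval a v | a in A].

Lemma chain_inf_le a v : A a -> chain_inf v <= sval a v.
Proof.
move=> Aa; apply: ge_inf; last by exists a.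
by exists (- q (- v)) => _ [b _ <-]; exact: minorant_lb.
Qed.

Lemma chain_inf_ge v x : (forall a, A a -> x <= sval a v) -> x <= chain_inf v.
Proof.
move=> h; apply: lb_le_inf; first by exists (sval a0 v), a0.
by move=> _ [a Aa <-]; exact: h.
Qed.

Lemma chain_infD v w : chain_inf (v + w) <= chain_inf v + chain_inf w.
Proof.
have le_sum a b : A a -> A b -> chain_inf (v + w) <= sval a v + sval b w.
  move=> Aa Ab; case: (A_chain Aa Ab) => /asboolP le_ab.
  - apply: le_trans (chain_inf_le _ Ab) _.
    case: b le_ab {Ab} => pb [sb _] /= le_ab.
    by apply: le_trans (sb.1 v w) _; have := le_ab v; lra.
  - apply: le_trans (chain_inf_le _ Aa) _.
    case: a le_ab {Aa} => pa [sa _] /= le_ab.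
    by apply: le_trans (sa.1 v w) _; have := le_ab w; lra.
have le_b b : A b -> chain_inf (v + w) - sval b w <= chain_inf v.
  by move=> Ab; apply: chain_inf_ge => a Aa; have := le_sum a b Aa Ab; lra.
suff : chain_inf (v + w) - chain_inf v <= chain_inf w by lra.
by apply: chain_inf_ge => b Ab; have := le_b b Ab; lra.
Qed.

Lemma chain_infZ s v : 0 < s -> chain_inf (sc s v) = s * chain_inf v.
Proof.
move=> s0; apply/le_anti/andP; split.
- rewrite -ler_pdivrMl //; apply: chain_inf_ge => a Aa.
  rewrite ler_pdivrMl //; apply: le_trans (chain_inf_le _ Aa) _.
  by case: a {Aa} => p [[_ hp] _] /=; rewrite hp.
- apply: chain_inf_ge => a Aa; case: a Aa => p [[? hp] ?] Aa /=.
  by rewrite hp // ler_pM2l //; exact: (chain_inf_le _ Aa).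
Qed.

Definition chain_inf_minorant : minorant :=
  exist _ chain_inf (conj (conj chain_infD chain_infZ)
    (fun v => le_trans (chain_inf_le v A_a0) ((svalP a0).2 v))).

End ChainInf.

Lemma exists_minimal_minorant :
  exists p : minorant, forall p', minorant_ge p p' -> minorant_ge p' p.
Proof.
pose top : minorant := exist _ q (conj q_sub (fun v => lexx (q v))).
apply: (ZL_preorder top).
- by move=> a; apply/asboolP => v.
- move=> a b c /asboolP ab /asboolP bc; apply/asboolP => v.
  exact: le_trans (bc v) (ab v).
- move=> A A_chain.
  have [->|/set0P [a0 A_a0]] := eqVneq A set0; first by exists top.
  exists (chain_inf_minorant A_chain A_a0) => a Aa.
  by apply/asboolP => v; exact: chain_inf_le.
Qed.

(* Pushing [p] down along [a]; a minimal [p] cannot be pushed, which forces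
   [p (- a) = - p a]. *)
Section Push.
Variable p : V -> R.
Hypothesis p_sub : sublinear p.
Variable a : V.

Definition push_set v := [set p (v + sc t a) - t * p a | t in [set t : R | 0 <= t]].
Definition push v := inf (push_set v).

Lemma push_le v t : 0 <= t -> push v <= p (v + sc t a) - t * p a.
Proof.
move=> t0; apply: ge_inf; last by exists t.
exists (- p (- v)) => _ [s s0 <-].
have := p_sub.1 (v + sc s a) (- v).
by rewrite addrAC subrr add0r sublinearZ_ge0 //; lra.
Qed.

Lemma push_ge v x : (forall t, 0 <= t -> x <= p (v + sc t a) - t * p a) -> x <= push v.
Proof.
move=> h; apply: lb_le_inf; first by exists (p (v + sc 0 a) - 0 * p a); exists 0 => /=.
by move=> _ [t t0 <-]; exact: h.
Qed.

Lemma push_le_p v : push v <= p v.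
Proof. by have := push_le v (lexx 0); rewrite sc0r addr0 mul0r subr0. Qed.

Lemma pushN : push (- a) <= - p a.
Proof. by have := push_le (- a) ler01; rewrite sc1 addNr sublinear0 // mul1r sub0r. Qed.

Lemma pushD v w : push (v + w) <= push v + push w.
Proof.
have le_sum s t : 0 <= s -> 0 <= t ->
    push (v + w) <= (p (v + sc s a) - s * p a) + (p (w + sc t a) - t * p a).
  move=> s0 t0; apply: le_trans (push_le (v + w) (addr_ge0 s0 t0)) _.
  rewrite scDl addrACA; have := p_sub.1 (v + sc s a) (w + sc t a); lra.
have le_t t : 0 <= t -> push (v + w) - (p (w + sc t a) - t * p a) <= push v.
  by move=> t0; apply: push_ge => s s0; have := le_sum s t s0 t0; lra.
suff : push (v + w) - push v <= push w by lra.
by apply: push_ge => t t0; have := le_t t t0; lra.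
Qed.

Lemma pushZ c v : 0 < c -> push (sc c v) = c * push v.
Proof.
move=> c0; have c_neq0 : c != 0 by rewrite gt_eqF.
apply/le_anti/andP; split.
- rewrite -ler_pdivrMl //; apply: push_ge => t t0.
  rewrite ler_pdivrMl //; apply: le_trans (push_le _ (mulr_ge0 (ltW c0) t0)) _.
  by rewrite -scA -scDr p_sub.2 //; lra.
- apply: push_ge => t t0.
  have := push_le v (divr_ge0 t0 (ltW c0)); rewrite -(ler_pM2l c0).
  move/le_trans; apply; rewrite mulrBr -(p_sub.2 c) // scDr scA mulrCA divff // mulr1.
  by rewrite mulrA mulrCA divff // mulr1.
Qed.

End Push.

Lemma minimal_sublinear_odd (p : V -> R) : sublinear p ->
  (forall p' : V -> R, sublinear p' -> (forall v, p' v <= p v) -> forall v, p v <= p' v) ->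
  forall v, p (- v) = - p v.
Proof.
move=> p_sub p_min v.
have push_sub : sublinear (push p v) by split; [exact: pushD | exact: pushZ].
have := p_min _ push_sub (push_le_p p_sub v) (- v).
have := pushN p_sub v; have := sublinearN_le p_sub v; lra.
Qed.

Theorem hahn_banach_sublinear : exists u : V -> R,
  [/\ forall v w, u (v + w) = u v + u w, forall s v, u (sc s v) = s * u v &
      forall v, u v <= q v].
Proof.
have [[p [p_sub p_q]] p_min] := exists_minimal_minorant.
have p_odd : forall v, p (- v) = - p v.
  apply: minimal_sublinear_odd => // p' p'_sub p'_p.
  have p'_q v : p' v <= q v by exact: le_trans (p'_p v) (p_q v).
  by have /asboolP := p_min (exist _ p' (conj p'_sub p'_q)) (asboolT p'_p).
exists p; split => //.
- move=> v w; apply/le_anti; rewrite p_sub.1 /=.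
  by have := p_sub.1 (- v) (- w); rewrite -opprD !p_odd; lra.
- move=> s v; case: (ltgtP s 0) => [s0|s0|->].
  + by rewrite -[sc s v]opprK -scNr p_odd p_sub.2 ?oppr_gt0 // mulNr opprK.
  + exact: p_sub.2.
  + by rewrite sc0r sublinear0 // mul0r.
Qed.

End SublinearHahnBanach.

(* A [lam] with [eta / eps < lam < eps / 2] exists exactly when
   [eta < eps ^+ 2 / 2]: this is where the constant of property [P] comes from. *)
Lemma bpb_constant (R : realFieldType) (eta eps : R) :
  0 < eps -> 0 <= eta < eps ^+ 2 / 2 ->
  exists lam, [/\ 0 < lam, eta < lam * eps & 2 * lam < eps].
Proof.
move=> eps_gt0 /andP[eta_ge0 eta_lt]; have eps_neq0 : eps != 0 by rewrite gt_eqF.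
exists ((eta / eps + eps / 2) / 2).
have lam_eps : (eta / eps + eps / 2) / 2 * eps = (eta + eps ^+ 2 / 2) / 2 by field.
have : 0 <= eta / eps by rewrite divr_ge0 // ltW.
split; first by lra.
- by rewrite lam_eps; lra.
- rewrite -(ltr_pM2r eps_gt0) -mulrA lam_eps.
  by rewrite expr2 in eta_lt *; lra.
Qed.

(* [K] is [R] or [R[i]], with real part [re] and embedding [ofR] of [R]; only
   the properties below are used. *)
Section ScalarField.
Context {R : realType} {K : numFieldType} (re : K -> R) (ofR : {rmorphism R -> K}).
Hypothesis reD : forall a b, re (a + b) = re a + re b.
Hypothesis re_ofR : forall r, re (ofR r) = r.
Hypothesis reM : forall r k, re (ofR r * k) = r * re k.
Hypothesis normE : forall k : K, `|k| = ofR (re `|k|).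
Hypothesis ler_ofR : forall r s, (ofR r <= ofR s) = (r <= s).
Hypothesis re_le_norm : forall k, re k <= re `|k|.
Hypothesis re_norm_eq : forall k, re k = re `|k| -> k = `|k|.

Lemma ltr_ofR r s : (ofR r < ofR s) = (r < s).
Proof. by rewrite !lt_def ler_ofR (inj_eq (fmorph_inj ofR)). Qed.

Lemma ofR_ge0 r : (0 <= ofR r) = (0 <= r).
Proof. by rewrite -(rmorph0 ofR) ler_ofR. Qed.

Lemma ofR_gt0 r : (0 < ofR r) = (0 < r).
Proof. by rewrite -(rmorph0 ofR) ltr_ofR. Qed.

Lemma norm_ofR r : `|ofR r| = ofR `|r|.
Proof.
have [r0|r0] := leP 0 r; first by rewrite !ger0_norm ?ofR_ge0.
have r0' : ofR r < 0 by rewrite -(rmorph0 ofR) ltr_ofR.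
by rewrite !ltr0_norm // rmorphN.
Qed.

Lemma re0 : re 0 = 0.
Proof. by rewrite -(rmorph0 ofR) re_ofR. Qed.

Lemma re1 : re 1 = 1.
Proof. by rewrite -(rmorph1 ofR) re_ofR. Qed.

Lemma reN k : re (- k) = - re k.
Proof. by have := reD k (- k); rewrite subrr re0; lra. Qed.

Lemma reB a b : re (a - b) = re a - re b.
Proof. by rewrite reD reN. Qed.

Lemma re_normM (a b : K) : re `|a * b| = re `|a| * re `|b|.
Proof. by rewrite normrM [in LHS]normE [X in ofR _ * X]normE -rmorphM re_ofR. Qed.

Lemma re_normD (a b : K) : re `|a + b| <= re `|a| + re `|b|.
Proof. by rewrite -ler_ofR rmorphD -!normE ler_normD. Qed.

Lemma re_norm_ofR r : re `|ofR r| = `|r|.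
Proof. by rewrite norm_ofR re_ofR. Qed.

Context {X : completeNormedModType K}.
Local Notation nrm := (@nrm R K re X).
Local Notation ballX := (@ballX R K re X).
Local Notation sphX := (@sphX R K re X).
Local Notation dnorm := (@dnorm R K re X).
Local Notation strongly_exposes := (@strongly_exposes R K re X).

Lemma normX_ofR (x : X) : `|x| = ofR (nrm x).
Proof. by rewrite /Defs.nrm -normr_id -normE normr_id. Qed.

Lemma nrm_ge0 x : 0 <= nrm x.
Proof. by rewrite -ofR_ge0 -normX_ofR. Qed.

Lemma nrmZ (a : K) x : nrm (a *: x) = re `|a| * nrm x.
Proof. by rewrite -[LHS]re_ofR -normX_ofR normrZ normE normX_ofR -rmorphM !re_ofR. Qed.

Lemma nrmZ_ofR (s : R) x : 0 <= s -> nrm (ofR s *: x) = s * nrm x.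
Proof. by move=> s0; rewrite nrmZ re_norm_ofR ger0_norm. Qed.

Lemma nrmD x y : nrm (x + y) <= nrm x + nrm y.
Proof. by rewrite -ler_ofR rmorphD -!normX_ofR ler_normD. Qed.

Lemma nrmN x : nrm (- x) = nrm x.
Proof. by rewrite /Defs.nrm normrN. Qed.

Lemma nrm_distC x y : nrm (x - y) = nrm (y - x).
Proof. by rewrite /Defs.nrm distrC. Qed.

Lemma nrm0 : nrm 0 = 0.
Proof. by rewrite /Defs.nrm normr0 re0. Qed.

Lemma nrm_eq0 x : nrm x = 0 -> x = 0.
Proof. by move=> h; apply/normr0_eq0; rewrite normX_ofR h rmorph0. Qed.

Lemma nrm_sub_le x y z : nrm (x - z) <= nrm (x - y) + nrm (y - z).
Proof. by have := nrmD (x - y) (y - z); rewrite addrA subrK. Qed.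

Lemma cvg_nrmP (u : nat -> X) (y : X) :
  u @ \oo --> y <-> forall e : R, 0 < e -> \forall n \near \oo, nrm (u n - y) < e.
Proof.
rewrite cvgrPdistC_lt; split => h e e0.
- by apply: filterS (h (ofR e) _) => [n|]; rewrite ?normX_ofR ?ltr_ofR ?ofR_gt0.
- have e0' : 0 < re `|e| by rewrite -ofR_gt0 -normE normr_gt0 gt_eqF.
  apply: filterS (h _ e0') => n; rewrite -ltr_ofR -normX_ofR -normE.
  by rewrite gtr0_norm.
Qed.

Lemma cvg_cst_eq (y x0 : X) : (fun _ : nat => y) @ \oo --> x0 -> y = x0.
Proof. by move=> /norm_cvg_lim <-; rewrite (norm_cvg_lim (cvg_cst y)). Qed.

Lemma rlinearN (u : X -> R) : (forall r v, u (ofR r *: v) = r * u v) ->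
  forall v, u (- v) = - u v.
Proof. by move=> uZ v; have := uZ (-1) v; rewrite rmorphN1 scaleN1r mulN1r. Qed.

Lemma ballX0 : ballX 0.
Proof. by rewrite /Defs.ballX /= nrm0 ler01. Qed.

Lemma sphX_ballX z : sphX z -> ballX z.
Proof. by rewrite /Defs.sphX /Defs.ballX /= => ->. Qed.

Definition klinear (f : X -> K) := forall (a : K) (u v : X), f (a *: u + v) = a * f u + f v.

Section KLinear.
Variable f : X -> K.
Hypothesis f_lin : klinear f.

Lemma klinear0 : f 0 = 0.
Proof.
have := f_lin 1 0 0; rewrite scaler0 add0r mul1r => f00.
by apply: (addrI (f 0)); rewrite -f00 addr0.
Qed.

Lemma klinearZ a u : f (a *: u) = a * f u.
Proof. by have := f_lin a u 0; rewrite !addr0 klinear0 addr0. Qed.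

Lemma klinearD u v : f (u + v) = f u + f v.
Proof. by have := f_lin 1 u v; rewrite scale1r mul1r. Qed.

Lemma klinearB u v : f (u - v) = f u - f v.
Proof. by rewrite klinearD -scaleN1r klinearZ mulN1r. Qed.

End KLinear.

(* [dnorm f] is a supremum in [R], which is [0] when the set is unbounded: a
   dual norm equal to [1] certifies boundedness. *)
Definition dnorm_set (f : X -> K) := [set re `|f x| | x in ballX].

Lemma dnorm1_bounded f : dnorm f = 1 -> has_ubound (dnorm_set f).
Proof.
move=> f1; have : dnorm f <> 0 by rewrite f1; exact/eqP/oner_neq0.
by apply: contra_notP => f_unb; apply: sup_out => -[_]; exact: f_unb.
Qed.

Lemma dnorm_ge f z : has_ubound (dnorm_set f) -> ballX z -> re `|f z| <= dnorm f.
Proof. by move=> f_bd bz; apply: (ub_le_sup f_bd); exists z. Qed.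

Lemma dnorm_le f M : (forall z, ballX z -> re `|f z| <= M) -> dnorm f <= M.
Proof.
move=> h; apply: ge_sup; first by exists (re `|f 0|), 0 => //; exact: ballX0.
by move=> _ [z bz <-]; exact: h.
Qed.

Lemma dnorm_attained f M z0 : (forall z, ballX z -> re `|f z| <= M) -> ballX z0 ->
  re `|f z0| = M -> dnorm f = M.
Proof.
move=> f_le bz0 fz0; apply/le_anti; rewrite dnorm_le //= -fz0.
by apply: dnorm_ge bz0; exists M => _ [z bz <-]; exact: f_le.
Qed.

Lemma dnorm_bound f : klinear f -> has_ubound (dnorm_set f) ->
  forall z, re `|f z| <= dnorm f * nrm z.
Proof.
move=> f_lin f_bd z; have [/nrm_eq0 ->|z_neq0] := eqVneq (nrm z) 0.
  by rewrite klinear0 // normr0 re0 nrm0 mulr0.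
have z_gt0 : 0 < nrm z by rewrite lt_def z_neq0 nrm_ge0.
have bz : ballX (ofR (nrm z)^-1 *: z).
  by rewrite /Defs.ballX /= nrmZ_ofR ?invr_ge0 ?nrm_ge0 // mulVf.
have := dnorm_ge f_bd bz; rewrite klinearZ // re_normM re_norm_ofR.
by rewrite ger0_norm ?invr_ge0 ?nrm_ge0 // mulrC ler_pdivrMr.
Qed.

Lemma norming_sphX g y : klinear g -> dnorm g = 1 -> ballX y -> g y = 1 -> sphX y.
Proof.
move=> g_lin g1 by_ gy; apply/le_anti; rewrite by_ /=.
by have := dnorm_bound g_lin (dnorm1_bounded g1) y; rewrite g1 gy normr1 re1 mul1r.
Qed.

Lemma dnorm_sub_le f g h : dnorm f = 1 -> dnorm g = 1 -> dnorm h = 1 ->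
  dnorm (fun z => f z - h z) <= dnorm (fun z => f z - g z) + dnorm (fun z => g z - h z).
Proof.
move=> f1 g1 h1.
have sub_bounded u v : dnorm u = 1 -> dnorm v = 1 -> has_ubound (dnorm_set (fun z => u z - v z)).
  move=> u1 v1; exists 2 => _ [z bz <-].
  have := dnorm_ge (dnorm1_bounded u1) bz; have := dnorm_ge (dnorm1_bounded v1) bz.
  by rewrite u1 v1; have := re_normD (u z) (- v z); rewrite normrN; lra.
apply: dnorm_le => z bz.
have := dnorm_ge (sub_bounded _ _ f1 g1) bz; have := dnorm_ge (sub_bounded _ _ g1 h1) bz.
by have := re_normD (f z - g z) (g z - h z); rewrite addrA subrK /=; lra.
Qed.

Lemma klinear_continuous f M : klinear f -> (forall z, re `|f z| <= M * nrm z) -> continuous f.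
Proof.
move=> f_lin f_le x; apply/cvgrPdist_lt => e e0.
have re_e0 : 0 < re `|e| by rewrite -ofR_gt0 -normE normr_gt0 gt_eqF.
have M1 : 0 < `|M| + 1 by rewrite ltr_wpDl.
have d0 : 0 < ofR (re `|e| / (`|M| + 1)) by rewrite ofR_gt0 divr_gt0.
have := @cvg_id _ (nbhs x); move/cvgrPdist_lt => /(_ _ d0).
apply: filterS => t /=.
rewrite normX_ofR ltr_ofR => xt_lt.
rewrite -klinearB // normE -(gtr0_norm e0) [X in _ < X]normE ltr_ofR.
apply: le_lt_trans (f_le _) _; apply: (@le_lt_trans _ _ ((`|M| + 1) * nrm (x - t))).
  by rewrite ler_wpM2r ?nrm_ge0 // (le_trans (ler_norm M)) // lerDl.
by rewrite mulrC -ltr_pdivlMr.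
Qed.

Lemma klinear_rotate h z : klinear h -> exists a : K, `|a| = 1 /\ h (a *: z) = `|h z|.
Proof.
move=> h_lin; have [hz0|hz_neq0] := eqVneq (h z) 0.
  by exists 1; rewrite normr1 scale1r hz0 normr0.
exists (`|h z| / h z); rewrite klinearZ // mulfVK //.
by rewrite normrM normfV normr_id mulfV // normr_eq0.
Qed.

Lemma klinear_re_bound w M : klinear w -> (forall v, re (w v) <= M * nrm v) ->
  forall v, re `|w v| <= M * nrm v.
Proof.
move=> w_lin w_le v; have [a [a1 wav]] := klinear_rotate v w_lin.
by rewrite -wav -[nrm v]mul1r -re1 -a1 -nrmZ w_le.
Qed.

Lemma re_max_norm h y : klinear h ->
  (forall z, ballX z -> re (h z) <= re (h y)) ->
  forall z, ballX z -> re `|h z| <= re (h y).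
Proof.
move=> h_lin h_max z bz; have [a [a1 haz]] := klinear_rotate z h_lin.
by rewrite -haz h_max // /Defs.ballX /= nrmZ a1 re1 mul1r.
Qed.

Lemma re_max_real h y : klinear h -> ballX y ->
  (forall z, ballX z -> re (h z) <= re (h y)) -> h y = ofR (re (h y)).
Proof.
move=> h_lin by_ h_max.
have e : re (h y) = re `|h y|.
  by apply/le_anti; rewrite re_le_norm re_max_norm.
by rewrite [LHS]re_norm_eq // normE -e.
Qed.

Section Ekeland.
Variable g : X -> R.
Hypothesis gD : forall a b, g (a + b) = g a + g b.
Hypothesis g_le : forall z, g z <= nrm z.
Variable lam : R.
Hypothesis lam_gt0 : 0 < lam.

Lemma gB a b : g (a - b) = g a - g b.
Proof. by have := gD (a - b) b; rewrite subrK; lra. Qed.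

Definition above z := [set w | ballX w /\ lam * nrm (w - z) <= g w - g z].

Lemma above_refl z : ballX z -> above z z.
Proof. by move=> bz; split => //; rewrite !subrr nrm0 mulr0. Qed.

Lemma above_trans z w v : above z w -> above w v -> above z v.
Proof.
move=> [_ zw] [bv wv]; split => //.
have : lam * nrm (v - z) <= lam * (nrm (v - w) + nrm (w - z)).
  by rewrite ler_pM2l // nrm_sub_le.
lra.
Qed.

Definition above_sup z := sup [set g w | w in above z].

Lemma above_sup_has z : ballX z -> has_sup [set g w | w in above z].
Proof.
move=> bz; split; first by exists (g z), z => //; exact: above_refl.
by exists 1 => _ [w [bw _] <-]; exact: le_trans (g_le w) bw.
Qed.

Lemma above_sup_ge z w : ballX z -> above z w -> g w <= above_sup z.
Proof. by move=> bz zw; apply: (ub_le_sup (above_sup_has bz).2); exists w. Qed.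

Definition tol (n : nat) : R := n.+1%:R^-1.

Lemma tol_gt0 n : 0 < tol n.
Proof. by rewrite invr_gt0. Qed.

Lemma tol_lt e : 0 < e -> exists n, tol n < e.
Proof. by move=> e0; have [n] := ltr_add_invr e0; rewrite add0r; exists n. Qed.

Section EkelandSequence.
Variable x : X.
Hypothesis bx : ballX x.

Definition ek_next z n := xget z [set w | above z w /\ above_sup z - tol n < g w].

Lemma ek_nextP z n : ballX z -> above z (ek_next z n) /\ above_sup z - tol n < g (ek_next z n).
Proof.
move=> bz; have [_ [w zw <-] gw] := sup_adherent (tol_gt0 n) (above_sup_has bz).
by apply: (@xgetPex _ z [set w | above z w /\ above_sup z - tol n < g w]); exists w.
Qed.

Fixpoint ek_seq n := if n is m.+1 then ek_next (ek_seq m) m else x.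

Lemma ek_seq_ball n : ballX (ek_seq n).
Proof. by elim: n => //= n IH; case: (ek_nextP n IH) => -[]. Qed.

Lemma ek_seq_above n m : (n <= m)%N -> above (ek_seq n) (ek_seq m).
Proof.
move=> /subnK <-; elim: (m - n)%N => [|k IH]; first exact/above_refl/ek_seq_ball.
rewrite addSn; apply: (above_trans IH).
by case: (ek_nextP (k + n)%N (ek_seq_ball (k + n))).
Qed.

(* Above [ek_seq n.+1], [g] ranges between [g (ek_seq n.+1)] and
   [above_sup (ek_seq n) < g (ek_seq n.+1) + tol n]. *)
Lemma ek_seq_diam n w : above (ek_seq n.+1) w -> lam * nrm (w - ek_seq n.+1) <= tol n.
Proof.
move=> sw; have [nS gS] := ek_nextP n (ek_seq_ball n).
have := above_sup_ge (ek_seq_ball n) (above_trans nS sw); case: sw => _ /=; lra.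
Qed.

Lemma ek_seq_cvg : cvg (ek_seq @ \oo).
Proof.
apply: cauchy_cvg; apply: cauchy_exP => e e0.
have re_e0 : 0 < re `|e| by rewrite -ofR_gt0 -normE normr_gt0 gt_eqF.
have [N tolN] := tol_lt (mulr_gt0 re_e0 lam_gt0).
exists (ek_seq N.+1), N.+1 => // m /= Nm.
rewrite -ball_normE /= -(gtr0_norm e0) normX_ofR [X in _ < X]normE ltr_ofR nrm_distC.
have := ek_seq_diam (ek_seq_above Nm); rewrite -(ltr_pM2l lam_gt0) mulrC; lra.
Qed.

Let y := lim (ek_seq @ \oo).

Lemma ek_seq_near e n : 0 < e -> exists m, (n <= m)%N /\ nrm (ek_seq m - y) < e.
Proof.
move=> e0; have [N _ hN] := (cvg_nrmP ek_seq y).1 ek_seq_cvg e e0.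
by exists (maxn N n); split; [exact: leq_maxr | apply: hN; exact: leq_maxl].
Qed.

Lemma ek_lim_above n : above (ek_seq n) y.
Proof.
split.
- apply/ler_addgt0Pr => e e0; have [m [_ my]] := ek_seq_near n e0.
  have := nrm_sub_le y (ek_seq m) 0; rewrite !subr0 nrm_distC.
  by have := ek_seq_ball m; rewrite /Defs.ballX /=; lra.
- apply/ler_addgt0Pr => e e0.
  have e_lam : 0 < e / (lam + 1) by rewrite divr_gt0 // ltr_wpDl // ltW.
  have [m [nm my]] := ek_seq_near n e_lam.
  have [_ nm_above] := ek_seq_above nm.
  have g_my : g (ek_seq m) - g y <= nrm (ek_seq m - y) by rewrite -gB.
  have : lam * nrm (y - ek_seq n) <= lam * (nrm (ek_seq m - y) + nrm (ek_seq m - ek_seq n)).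
    by rewrite ler_pM2l // [nrm (ek_seq m - y)]nrm_distC nrm_sub_le.
  have : (lam + 1) * nrm (ek_seq m - y) <= e.
    by rewrite mulrC -ler_pdivlMr ?ltr_wpDl // ltW.
  lra.
Qed.

Lemma ek_lim_maximal z : ballX z -> g z - g y <= lam * nrm (z - y).
Proof.
move=> bz; rewrite leNgt; apply/negP => gz.
have z_above n : above (ek_seq n) z.
  by apply: above_trans (ek_lim_above n) _; split => //; exact: ltW.
have : lam * nrm (z - y) <= 0.
  apply/ler_addgt0Pr => e e0; have [n tol_n] := tol_lt (divr_gt0 e0 (ltr0Sn _ 1)).
  have := ek_seq_diam (z_above n.+1); have := ek_seq_diam (ek_lim_above n.+1).
  have : lam * nrm (z - y) <= lam * (nrm (z - ek_seq n.+1) + nrm (y - ek_seq n.+1)).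
    by rewrite ler_pM2l // -[nrm (y - _)]nrm_distC nrm_sub_le.
  lra.
rewrite pmulr_rle0 // => zy_le0.
have /nrm_eq0/subr0_eq zy : nrm (z - y) = 0 by apply/le_anti; rewrite zy_le0 nrm_ge0.
by move: gz; rewrite zy subrr nrm0 mulr0; lra.
Qed.

End EkelandSequence.

Lemma ekeland x : ballX x -> exists y, [/\ ballX y, lam * nrm (y - x) <= g y - g x &
  forall z, ballX z -> g z - g y <= lam * nrm (z - y)].
Proof.
move=> bx; have [by_ yx] := ek_lim_above bx 0.
by exists (lim (ek_seq x @ \oo)); split => //; exact: ek_lim_maximal.
Qed.

End Ekeland.

Hypothesis re_lift : forall u : X -> R,
  (forall a b, u (a + b) = u a + u b) -> (forall r v, u (ofR r *: v) = r * u v) ->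
  exists w : X -> K, klinear w /\ forall v, re (w v) = u v.

Section BishopPhelpsBollobas.
Variable f : X -> K.
Hypothesis f_lin : klinear f.
Hypothesis f1 : dnorm f = 1.

Lemma f_bound z : re `|f z| <= nrm z.
Proof. by have := dnorm_bound f_lin (dnorm1_bounded f1) z; rewrite f1 mul1r. Qed.

Definition ref z := re (f z).

Lemma refD a b : ref (a + b) = ref a + ref b.
Proof. by rewrite /ref klinearD // reD. Qed.

Lemma ref_le z : ref z <= nrm z.
Proof. exact: le_trans (re_le_norm _) (f_bound z). Qed.

Lemma refZ s z : ref (ofR s *: z) = s * ref z.
Proof. by rewrite /ref klinearZ // reM. Qed.

Section Cone.
Variables (y : X) (lam : R).
Hypothesis by_ : ballX y.
Hypothesis lam_gt0 : 0 < lam.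
Hypothesis y_max : forall z, ballX z -> ref z - ref y <= lam * nrm (z - y).

Definition cone := [set c : X | exists t z, [/\ 0 <= t, ballX z & c = ofR t *: (z - y)]].

Lemma cone0 : cone 0.
Proof. by exists 0, y; rewrite rmorph0 scale0r. Qed.

Lemma cone_le c : cone c -> ref c <= lam * nrm c.
Proof.
move=> [t [z [t0 bz ->]]]; rewrite refZ nrmZ_ofR // /ref klinearB // reB mulrCA.
exact/ler_wpM2l/y_max.
Qed.

Lemma coneZ s c : 0 <= s -> cone c -> cone (ofR s *: c).
Proof.
move=> s0 [t [z [t0 bz ->]]]; exists (s * t), z.
by rewrite scalerA rmorphM mulr_ge0.
Qed.

(* A sum of two points of [cone] is a positive multiple of a convex combination
   of points of [B_X - y]. *)
Lemma coneD c1 c2 : cone c1 -> cone c2 -> cone (c1 + c2).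
Proof.
move=> [t1 [z1 [t1_ge0 bz1 ->]]] [t2 [z2 [t2_ge0 bz2 ->]]].
have [t12_0|t12_neq0] := eqVneq (t1 + t2) 0.
  have [-> ->] : t1 = 0 /\ t2 = 0 by split; lra.
  by rewrite rmorph0 !scale0r addr0; exact: cone0.
have t12_gt0 : 0 < t1 + t2 by rewrite lt_def t12_neq0 addr_ge0.
exists (t1 + t2), (ofR (t1 + t2)^-1 *: (ofR t1 *: z1 + ofR t2 *: z2)); split.
- exact: ltW.
- rewrite /Defs.ballX /= nrmZ_ofR ?invr_ge0 ?(ltW t12_gt0) // ler_pdivrMl // mulr1.
  apply: le_trans (nrmD _ _) _; rewrite !nrmZ_ofR //.
  have : t1 * nrm z1 <= t1 by rewrite ler_piMr.
  have : t2 * nrm z2 <= t2 by rewrite ler_piMr.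
  lra.
- apply/esym; rewrite scalerBr scalerA -rmorphM mulfV // rmorph1 scale1r.
  by rewrite !scalerBr rmorphD scalerDl opprD addrACA.
Qed.

(* [gauge] is below [lam * nrm] and [gauge (- c) <= - ref c] on [cone], so a
   linear minorant of it separates [cone] from the [lam]-ball. *)
Definition gauge v := inf [set lam * nrm (v + c) - ref c | c in cone].

Lemma gauge_le v c : cone c -> gauge v <= lam * nrm (v + c) - ref c.
Proof.
move=> hc; apply: ge_inf; last by exists c.
exists (- (lam * nrm v)) => _ [c' hc' <-]; have := cone_le hc'.
have : nrm c' <= nrm (v + c') + nrm v.
  by have := nrm_sub_le c' (- v) 0; rewrite opprK !subr0 nrmN [c' + v]addrC.
rewrite -(ler_pM2l lam_gt0); lra.
Qed.

Lemma gauge_ge v a : (forall c, cone c -> a <= lam * nrm (v + c) - ref c) -> a <= gauge v.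
Proof.
move=> h; apply: lb_le_inf; first by exists (lam * nrm (v + 0) - ref 0), 0 => //; exact: cone0.
by move=> _ [c hc <-]; exact: h.
Qed.

Lemma gauge_ub v : gauge v <= lam * nrm v.
Proof. by have := gauge_le v cone0; rewrite addr0 /ref klinear0 // re0 subr0. Qed.

Lemma gauge_sublinear : sublinear (fun s (v : X) => ofR s *: v) gauge.
Proof.
split.
- move=> v w.
  have le_sum c1 c2 : cone c1 -> cone c2 ->
      gauge (v + w) <= (lam * nrm (v + c1) - ref c1) + (lam * nrm (w + c2) - ref c2).
    move=> h1 h2; apply: le_trans (gauge_le _ (coneD h1 h2)) _.
    rewrite addrACA refD.
    have : lam * nrm (v + c1 + (w + c2)) <= lam * (nrm (v + c1) + nrm (w + c2)).
      by rewrite ler_pM2l // nrmD.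
    lra.
  have le_c2 c2 : cone c2 -> gauge (v + w) - (lam * nrm (w + c2) - ref c2) <= gauge v.
    by move=> h2; apply: gauge_ge => c1 h1; have := le_sum c1 c2 h1 h2; lra.
  suff : gauge (v + w) - gauge v <= gauge w by lra.
  by apply: gauge_ge => c2 h2; have := le_c2 c2 h2; lra.
- move=> s v s0; have s_neq0 : s != 0 by rewrite gt_eqF.
  apply/le_anti/andP; split.
  + rewrite -ler_pdivrMl //; apply: gauge_ge => c hc.
    rewrite ler_pdivrMl //; apply: le_trans (gauge_le _ (coneZ (ltW s0) hc)) _.
    by rewrite -scalerDr nrmZ_ofR ?(ltW s0) // refZ; lra.
  + apply: gauge_ge => c hc.
    have s_inv : 0 <= s^-1 by rewrite invr_ge0 ltW.
    have := gauge_le v (coneZ s_inv hc); rewrite -(ler_pM2l s0).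
    move/le_trans; apply; rewrite refZ mulrBr [s * (s^-1 * _)]mulrA mulfV // mul1r.
    by rewrite mulrCA -(nrmZ_ofR _ (ltW s0)) scalerDr scalerA -rmorphM mulfV // rmorph1 scale1r.
Qed.

Lemma cone_separation : exists u : X -> R,
  [/\ forall a b, u (a + b) = u a + u b, forall r v, u (ofR r *: v) = r * u v,
      forall v, u v <= lam * nrm v & forall z, ballX z -> ref (z - y) <= u (z - y)].
Proof.
have [||||] := @hahn_banach_sublinear R X (fun s v => ofR s *: v) _ _ _ _ _ gauge_sublinear.
- by move=> s v w; rewrite scalerDr.
- by move=> s t v; rewrite rmorphD scalerDl.
- by move=> s t v; rewrite scalerA rmorphM.
- by move=> v; rewrite rmorph1 scale1r.
move=> u [uD uZ u_le]; have uN := rlinearN uZ.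
exists u; split => // [v|z bz]; first exact: le_trans (u_le v) (gauge_ub v).
have cz : cone (z - y) by exists 1, z; rewrite rmorph1 scale1r.
have := le_trans (u_le (- (z - y))) (gauge_le _ cz).
by rewrite addNr nrm0 mulr0 sub0r uN; lra.
Qed.

Lemma perturbed_max : exists w : X -> K,
  [/\ klinear w, forall v, re `|w v| <= lam * nrm v &
      forall z, ballX z -> re (f z + w z) <= re (f y + w y)].
Proof.
have [u [uD uZ u_le u_ge]] := cone_separation.
have uN := rlinearN uZ.
have [|| w [w_lin w_re]] := re_lift (u := fun v => - u v).
- by move=> a b; rewrite uD opprD.
- by move=> r v; rewrite uZ mulrN.
exists w; split => // [|z bz].
  by apply: klinear_re_bound => // v; rewrite w_re -uN -(nrmN v) u_le.
have := u_ge z bz; rewrite /ref klinearB // reB uD uN !reD !w_re; lra.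
Qed.

End Cone.

Lemma perturbed_norm_close (w : X -> K) (y : X) (lam : R) :
  klinear w -> (forall v, re `|w v| <= lam * nrm v) -> 0 <= lam -> ballX y ->
  (forall z, ballX z -> re (f z + w z) <= re (f y + w y)) ->
  `|1 - re (f y + w y)| <= lam.
Proof.
move=> w_lin w_le lam_ge0 by_ h_max.
have h_lin : klinear (fun z => f z + w z).
  by move=> a u v; rewrite f_lin w_lin mulrDr addrACA.
have w_le_lam z : ballX z -> re `|w z| <= lam.
  by move=> bz; apply: le_trans (w_le z) (ler_piMr lam_ge0 bz).
rewrite ler_norml; apply/andP; split.
- suff : re (f y + w y) <= 1 + lam by lra.
  apply: le_trans (re_le_norm _) _; apply: le_trans (re_normD _ _) _.
  exact: lerD (le_trans (f_bound y) by_) (w_le_lam y by_).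
- suff : 1 <= re (f y + w y) + lam by lra.
  rewrite -f1; apply: dnorm_le => z bz; rewrite -[f z](addrK (w z)).
  have := re_normD (f z + w z) (- w z); rewrite normrN.
  by have := re_max_norm h_lin h_max bz; have := w_le_lam z bz; lra.
Qed.

Lemma normalized_perturbation (w : X -> K) (y : X) (lam : R) :
  klinear w -> (forall v, re `|w v| <= lam * nrm v) -> 0 <= lam < 1 -> ballX y ->
  (forall z, ballX z -> re (f z + w z) <= re (f y + w y)) ->
  exists g : X -> K, [/\ sphX y, klinear g, continuous g, dnorm g = 1 &
    g y = 1 /\ dnorm (fun z => g z - f z) <= 2 * lam].
Proof.
move=> w_lin w_le /andP[lam_ge0 lam_lt1] by_ h_max.
have rho_close := perturbed_norm_close w_lin w_le lam_ge0 by_ h_max.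
pose h z := f z + w z.
have h_lin : klinear h by move=> a u v; rewrite /h f_lin w_lin mulrDr addrACA.
set rho := re (h y) in rho_close.
have h_le : forall z, ballX z -> re `|h z| <= rho := re_max_norm h_lin h_max.
have hy : h y = ofR rho := re_max_real h_lin by_ h_max.
have rho_gt0 : 0 < rho by move: rho_close; rewrite ler_norml; lra.
have rho_neq0 : rho != 0 by rewrite gt_eqF.
pose g z := ofR rho^-1 * h z.
have g_lin : klinear g by move=> a u v; rewrite /g h_lin mulrDr mulrCA.
have gy : g y = 1 by rewrite /g hy -rmorphM mulVf // rmorph1.
have g_le z : ballX z -> re `|g z| <= 1.
  move=> bz; rewrite /g re_normM re_norm_ofR ger0_norm ?invr_ge0 ?(ltW rho_gt0) //.
  by rewrite ler_pdivrMl // mulr1 h_le.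
have g1 : dnorm g = 1 by apply: dnorm_attained g_le by_ _; rewrite gy normr1 re1.
exists g; split => //.
- exact: norming_sphX g_lin g1 by_ gy.
- exact: klinear_continuous g_lin (dnorm_bound g_lin (dnorm1_bounded g1)).
split => //; apply: dnorm_le => z bz.
have -> : g z - f z = ofR (rho^-1 - 1) * h z + w z.
  by rewrite /g /h rmorphB rmorph1 mulrBl mul1r; ring.
apply: le_trans (re_normD _ _) _; rewrite re_normM re_norm_ofR.
have : `|rho^-1 - 1| * re `|h z| <= `|rho^-1 - 1| * rho by rewrite ler_wpM2l ?h_le.
have -> : `|rho^-1 - 1| * rho = `|1 - rho|.
  by rewrite -[X in _ * X](ger0_norm (ltW rho_gt0)) -normrM mulrBl mulVf // mul1r.
have := le_trans (w_le z) (ler_piMr lam_ge0 bz); lra.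
Qed.

Theorem bishop_phelps_bollobas x eps : ballX x -> 0 < eps <= 1 ->
  1 - eps ^+ 2 / 2 < ref x ->
  exists y g, [/\ sphX y, klinear g, continuous g, dnorm g = 1 &
    [/\ g y = 1, nrm (y - x) < eps & dnorm (fun z => g z - f z) < eps]].
Proof.
move=> bx /andP[eps_gt0 eps_le1] x_ref.
have ref_x_le1 : ref x <= 1 := le_trans (ref_le x) bx.
have [|lam [lam_gt0 eta_lt lam_lt]] := @bpb_constant _ (1 - ref x) eps eps_gt0.
  by apply/andP; split; lra.
have [y [by_ yx y_max]] := ekeland refD ref_le lam_gt0 bx.
have [w [w_lin w_le w_max]] := perturbed_max by_ lam_gt0 y_max.
have [|g [sy g_lin g_cont g1 [gy g_near]]] := normalized_perturbation w_lin w_le _ by_ w_max.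
  by apply/andP; split; lra.
exists y, g; split => //; split => //; last exact: le_lt_trans g_near lam_lt.
have : lam * nrm (y - x) < lam * eps by have := le_trans (ref_le y) by_; lra.
by rewrite ltr_pM2l.
Qed.

End BishopPhelpsBollobas.

Lemma sup_re_norming g y : dnorm g = 1 -> ballX y -> g y = 1 ->
  sup [set re (g z) | z in ballX] = 1.
Proof.
move=> g1 by_ gy.
have re_le1 z : ballX z -> re (g z) <= 1.
  by move=> bz; rewrite -g1; apply: le_trans (re_le_norm _) (dnorm_ge (dnorm1_bounded g1) bz).
apply/le_anti/andP; split.
- apply: ge_sup; first by exists (re (g 0)), 0 => //; exact: ballX0.
  by move=> _ [z bz <-]; exact: re_le1.
- rewrite -re1 -gy; apply: ub_le_sup; last by exists y.
  by exists 1 => _ [z bz <-]; exact: re_le1.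
Qed.

Lemma strongly_exposed_norming g x0 y : strongly_exposes g x0 -> dnorm g = 1 ->
  ballX y -> g y = 1 -> y = x0.
Proof.
move=> [_ [g_x0 g_exp]] g1 by_ gy; apply: cvg_cst_eq; apply: g_exp => //.
by rewrite gy g_x0 (sup_re_norming g1 by_ gy) re1; exact: cvg_cst.
Qed.

Lemma propP_dense : @propP R K re X -> @dense_strexp_SE R K re X.
Proof.
move=> [eta [eta_gt0 eta_P]] x f [sx [f_dual [f1 fx]]] e e_gt0.
pose e' := Num.min e 2^-1.
have e'_01 : 0 < e' < 1.
  by rewrite lt_min e_gt0 invr_gt0 ltr0Sn gt_min invf_lt1 ?ltr0Sn ?ltr1n ?orbT.
have [|g [y [[g_dual [x0 g_exp]] [sy [g1 [gy [gf yx]]]]]]] := eta_P e' e'_01 x f sx f_dual f1.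
  by rewrite fx re1; have := eta_gt0 e' e'_01; lra.
have e'_le : e' <= e by rewrite ge_min lexx.
have y_x0 := strongly_exposed_norming g_exp g1 (sphX_ballX sy) gy.
exists y, g; split; first by rewrite y_x0; exists g.
split; first by split => //; exists x0.
do 2 split => //; split.
- exact: lt_le_trans yx e'_le.
- exact: lt_le_trans gf e'_le.
Qed.

Lemma dense_propP_sq : @dense_strexp_SE R K re X -> @propP_with R K re X (fun e => e ^+ 2 / 2).
Proof.
move=> dense; split => [e /andP[e_gt0 _]|]; first by rewrite divr_gt0 ?exprn_gt0.
move=> e /andP[e_gt0 e_lt1] x f sx [f_lin f_cont] f1 fx.
have e_01 : 0 < e <= 1 by rewrite e_gt0 ltW.
have [y1 [g1 [sy1 g1_lin g1_cont g1_1 [g1y1 y1x g1f]]]] :=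
  bishop_phelps_bollobas f_lin f1 (sphX_ballX sx) e_01 fx.
pose d := Num.min (e - nrm (y1 - x)) (e - dnorm (fun z => g1 z - f z)).
have d_gt0 : 0 < d by rewrite lt_min !subr_gt0 y1x g1f.
have [y [g [[_ [_ [by_ _]]] [g_SE [g_1 [gy [yy1 gg1]]]]]]] :=
  dense y1 g1 (conj sy1 (conj (conj g1_lin g1_cont) (conj g1_1 g1y1))) d d_gt0.
have [[g_lin _] _] := g_SE.
have d_le1 : d <= e - nrm (y1 - x) by rewrite ge_min lexx.
have d_le2 : d <= e - dnorm (fun z => g1 z - f z) by rewrite ge_min lexx orbT.
exists g, y; split => //; split; first exact: norming_sphX g_lin g_1 by_ gy.
do 2 split => //; split.
- by have := dnorm_sub_le g_1 g1_1 f1; lra.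
- by have := nrm_sub_le y y1 x; lra.
Qed.

Theorem lemma3p10_generic : @lemma3p10_equiv R K re X.
Proof.
have := @propP_dense; have := @dense_propP_sq.
have sq_P : @propP_with R K re X (fun e => e ^+ 2 / 2) -> @propP R K re X.
  by move=> h; exists (fun e => e ^+ 2 / 2).
by split; split; tauto.
Qed.

End ScalarField.

Lemma lemma3p10_real (R : realType) (X : completeNormedModType R) :
  @lemma3p10_equiv R R (fun r : R => r) X.
Proof.
apply: (@lemma3p10_generic _ _ _ idfun) => //; first exact: ler_norm.
by move=> u uD uZ; exists u; split => // a v w; rewrite uD uZ.
Qed.

Section ComplexScalars.
Variable R : realType.
Local Open Scope complex_scope.

Lemma cReD (a b : R[i]) : complex.Re (a + b) = complex.Re a + complex.Re b.
Proof. by case: a => ? ?; case: b. Qed.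

Lemma cReMr (r : R) (k : R[i]) : complex.Re (r%:C * k) = r * complex.Re k.
Proof. by case: k => a b /=; rewrite mul0r subr0. Qed.

Lemma cRe_le_norm (k : R[i]) : complex.Re k <= complex.Re `|k|.
Proof. by have := normc_ge_Re k; rewrite lecE => /andP[_ /(le_trans (ler_norm _))]. Qed.

Lemma cRe_eq_norm (k : R[i]) : complex.Re k = complex.Re `|k| -> k = `|k|.
Proof.
case: k => a b; rewrite normc_def /= => a_eq.
have a2 : a ^+ 2 = a ^+ 2 + b ^+ 2 by rewrite {1}a_eq sqr_sqrtr // addr_ge0 ?sqr_ge0.
have b0 : b = 0 by apply/eqP; rewrite -sqrf_eq0; apply/eqP; lra.
by rewrite -a_eq b0.
Qed.

Lemma complex_lift (X : completeNormedModType R[i]) (u : X -> R) :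
  (forall a b, u (a + b) = u a + u b) -> (forall r v, u (r%:C *: v) = r * u v) ->
  exists w : X -> R[i], klinear w /\ forall v, complex.Re (w v) = u v.
Proof.
move=> uD uZ.
have uN := rlinearN (ofR := real_complex R) uZ.
pose w v := (u v)%:C - 'i * (u ('i *: v))%:C.
have wD v1 v2 : w (v1 + v2) = w v1 + w v2 by rewrite /w scalerDr !uD !rmorphD; ring.
have ii v : 'i *: ('i *: v) = - v :> X by rewrite scalerA -expr2 sqr_i scaleN1r.
have wZ a v : w (a *: v) = a * w v.
  case: a => x y.
  have -> : x +i* y = x%:C + y%:C * 'i.
    by apply/eqP; rewrite eq_complex /= !(mulr0, mul0r, mulr1, addr0, subr0, add0r) !eqxx.
  have iZ (c : R) v' : 'i *: (c%:C *: v') = c%:C *: ('i *: v') by rewrite !scalerA mulrC.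
  rewrite /w !scalerDl -!scalerA !scalerDr !iZ !uD !uZ ii uN.
  by apply/eqP; rewrite eq_complex /=; apply/andP; split; apply/eqP; ring.
exists w; split => [a v1 v2|v]; first by rewrite wD wZ.
by rewrite /w /=; ring.
Qed.

Lemma lemma3p10_complex (X : completeNormedModType R[i]) :
  @lemma3p10_equiv R R[i] (@complex.Re R) X.
Proof.
apply: (@lemma3p10_generic _ _ _ (real_complex R)).
- exact: cReD.
- by [].
- exact: cReMr.
- by move=> k; rewrite normc_def.
- exact: lecR.
- exact: cRe_le_norm.
- exact: cRe_eq_norm.
- exact: complex_lift.
Qed.

End ComplexScalars.

Theorem lemma3p10 :
  (forall (R : realType) (X : completeNormedModType R),
      @lemma3p10_equiv R R (fun r : R => r) X) /\
  (forall (R : realType) (X : completeNormedModType R[i]),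
      @lemma3p10_equiv R R[i] (@complex.Re R) X).
Proof. by split => R X; [exact: lemma3p10_real | exact: lemma3p10_complex]. Qed.
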